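(* Let $c>0$, $0<\delta<1$, $M\ge1$ and let $\chi:\mathbb R\to\mathbb R$ satisfy $\chi(t)=ct$ for every $t\ge-\delta$ and $\chi|_{(-\infty,0]}\in\widetilde{\mathcal W}^-\cup\mathcal W^+_M$. Let $g$ be a smooth function on $\mathbb R$ supported in $[-1,1]$ with $g(t)=g(-t)$, $0\le g\le1$, $\int_{\mathbb R}g=1$; put $g_\epsilon(t)=\epsilon^{-1}g(t/\epsilon)$ and $\chi_\epsilon=\chi*g_\epsilon$ for $\epsilon>0$. Then: (i) if $\chi|_{(-\infty,0]}\in\widetilde{\mathcal W}^-$, then $\chi_\epsilon|_{(-\infty,0]}\in\widetilde{\mathcal W}^-$ for every $0<\epsilon<\delta$, $\chi_\epsilon\searrow\chi$ as $\epsilon\searrow0$, and $\sup(\chi_\epsilon-\chi)\le c\epsilon$; (ii) if $\chi|_{(-\infty,0]}\in\mathcal W^+_M$ and $0<\epsilon<\delta^2/2$, then $\chi_\epsilon|_{(-\infty,0]}\in\mathcal W^+_{M/(1-\delta)}$; moreover, if $0<\epsilon<\delta^2/8$, then $\overline\chi_\epsilon:=\chi_\epsilon(\cdot+\epsilon)-c\epsilon$ satisfies $\overline\chi_\epsilon|_{(-\infty,0]}\in\mathcal W^+_{M/(1-\delta)^2}$ and $\overline\chi_\epsilon\ge\chi-c\epsilon$, and $\overline\chi_\epsilon\to\chi$ uniformly on compact subsets of $\mathbb R$ as $\epsilon\to0$.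
   Context: $\widetilde{\mathcal W}^-$: convex non-decreasing $\chi:\mathbb R_{\le0}\to\mathbb R_{\le0}$, $\chi(0)=0$, $\chi\not\equiv0$. $\mathcal W^+_M$: increasing concave $\chi:\mathbb R_{\le0}\to\mathbb R_{\le0}$, $\chi(0)=0$, $\chi<0$ on $(-\infty,0)$, $|t\chi'(t)|\le M|\chi(t)|$ for $t\le0$. *)

From Stdlib Require Import Reals Lra.
From Coquelicot Require Import Coquelicot.
Open Scope R_scope.

Definition conv (f h : R -> R) (t : R) : R :=
  RInt_gen (fun s => f (t - s) * h s) (Rbar_locally m_infty) (Rbar_locally p_infty).

Definition mollif (g : R -> R) (eps : R) (t : R) : R := / eps * g (t / eps).

Definition chi_eps (chi g : R -> R) (eps : R) : R -> R := conv chi (mollif g eps).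

Definition chibar_eps (chi g : R -> R) (c eps : R) (t : R) : R :=
  chi_eps chi g eps (t + eps) - c * eps.

(* The classes below are predicates on the restriction f|_{(-oo,0]}:
   they only mention values of f at points t <= 0. *)

Definition Wminus_tilde (f : R -> R) : Prop :=
  (forall x y l, x <= 0 -> y <= 0 -> 0 <= l <= 1 ->
     f (l * x + (1 - l) * y) <= l * f x + (1 - l) * f y) /\
  (forall x y, x <= y -> y <= 0 -> f x <= f y) /\
  (forall t, t <= 0 -> f t <= 0) /\
  f 0 = 0 /\
  (exists t, t <= 0 /\ f t <> 0).

(* W^+_M : increasing concave f : R_{<=0} -> R_{<=0}, f(0)=0, f<0 on (-oo,0),
   |t f'(t)| <= M |f(t)| for t <= 0 (at every t < 0 where f is differentiable;
   at t = 0 the left side vanishes). *)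
Definition Wplus (M : R) (f : R -> R) : Prop :=
  (forall x y, x < y -> y <= 0 -> f x < f y) /\
  (forall x y l, x <= 0 -> y <= 0 -> 0 <= l <= 1 ->
     l * f x + (1 - l) * f y <= f (l * x + (1 - l) * y)) /\
  (forall t, t <= 0 -> f t <= 0) /\
  f 0 = 0 /\
  (forall t, t < 0 -> f t < 0) /\
  (forall t d, t < 0 -> is_derive f t d -> Rabs (t * d) <= M * Rabs (f t)).

(* Mollifying with the even kernel [g] means averaging [s |-> chi (t - e s)] against
   [g s ds] on [[-1, 1]].  Averaging preserves convexity, concavity and monotonicity,
   reproduces affine functions (so [chi_e = chi] near [0]), is monotone in [e] for convex
   [chi] (through the symmetrised form [(chi (t - e s) + chi (t + e s)) / 2]), and moves
   values by at most the local Lipschitz constant times [e].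
   The hypothesis [|t chi'(t)| <= M |chi t|] is only available where [chi] is
   differentiable; since a convex function is differentiable on a dense set (nested
   windows on which the chord slopes pinch together), concavity turns it into the chord
   bound [(chi (y + h) - chi y) (- y) <= h M (- chi y)].  Averaging that bound over a
   window of radius [e] replaces [- t] by [- t - e], which costs a factor [1 - delta]
   wherever [chi_e] is not already linear, and the shift by [e] in [chibar_e] costs
   another one. *)

From Stdlib Require Import Reals Lra FunctionalExtensionality.
From Coquelicot Require Import Coquelicot.
Open Scope R_scope.

(** * Convex functions of a real variable *)

Definition convex (f : R -> R) : Prop :=
  forall x y l, 0 <= l <= 1 -> f (l * x + (1 - l) * y) <= l * f x + (1 - l) * f y.

Definition slope (f : R -> R) (x y : R) : R := (f y - f x) / (y - x).

Lemma slope_sym f x y : slope f x y = slope f y x.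
Proof.
  unfold slope; destruct (Req_dec x y) as [->|Nxy]; [reflexivity|field; lra].
Qed.

Lemma slope_mul f x y : x <> y -> slope f x y * (y - x) = f y - f x.
Proof. intros Nxy; unfold slope; field; lra. Qed.

Lemma slope_opp (f : R -> R) x y : slope (fun z => - f z) x y = - slope f x y.
Proof. unfold slope, Rdiv; ring. Qed.

Lemma Rdiv_le_cross a b c d : 0 < b -> 0 < d -> a * d <= c * b -> a / b <= c / d.
Proof.
  intros Hb Hd H.
  apply Rmult_le_reg_r with (b * d); [nra|].
  replace (a / b * (b * d)) with (a * d) by (field; lra).
  replace (c / d * (b * d)) with (c * b) by (field; lra).
  exact H.
Qed.

Lemma segment_convex_between f x y z :
  (forall l, 0 <= l <= 1 -> f (l * x + (1 - l) * z) <= l * f x + (1 - l) * f z) ->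
  x < y < z -> f y * (z - x) <= (z - y) * f x + (y - x) * f z.
Proof.
  intros Hf Hxyz.
  set (l := (z - y) / (z - x)).
  assert (Hl : 0 <= l <= 1).
  { unfold l; split; [apply Rdiv_le_0_compat; lra|].
    apply Rmult_le_reg_r with (z - x); [lra|].
    replace ((z - y) / (z - x) * (z - x)) with (z - y) by (field; lra); lra. }
  pose proof (Hf l Hl) as H.
  replace (l * x + (1 - l) * z) with y in H by (unfold l; field; lra).
  replace ((z - y) * f x + (y - x) * f z) with ((l * f x + (1 - l) * f z) * (z - x))
    by (unfold l; field; lra).
  apply Rmult_le_compat_r; lra.
Qed.

Lemma convex_between f x y z : convex f -> x < y < z ->
  f y * (z - x) <= (z - y) * f x + (y - x) * f z.
Proof. intros Hf; apply segment_convex_between; intros l Hl; apply Hf, Hl. Qed.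

Lemma convex_of_between f :
  (forall x y z, x < y < z -> f y * (z - x) <= (z - y) * f x + (y - x) * f z) -> convex f.
Proof.
  intros H x y l Hl.
  destruct (Req_dec l 0) as [->|N0].
  { replace (0 * x + (1 - 0) * y) with y by ring; lra. }
  destruct (Req_dec l 1) as [->|N1].
  { replace (1 * x + (1 - 1) * y) with x by ring; lra. }
  set (p := l * x + (1 - l) * y).
  destruct (Rtotal_order x y) as [Hxy|[<-|Hxy]].
  - specialize (H x p y ltac:(unfold p; split; nra)).
    replace (y - p) with (l * (y - x)) in H by (unfold p; ring).
    replace (p - x) with ((1 - l) * (y - x)) in H by (unfold p; ring).
    apply Rmult_le_reg_r with (y - x); nra.
  - unfold p; replace (l * x + (1 - l) * x) with x by ring; lra.
  - specialize (H y p x ltac:(unfold p; split; nra)).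
    replace (x - p) with ((1 - l) * (x - y)) in H by (unfold p; ring).
    replace (p - y) with (l * (x - y)) in H by (unfold p; ring).
    apply Rmult_le_reg_r with (x - y); nra.
Qed.

Lemma derive_le_of_quotient_le f t d B h : is_derive f t d -> 0 < h ->
  (forall k, 0 < k <= h -> (f (t + k) - f t) / k <= B) -> d <= B.
Proof.
  intros Hd Hh HB; apply is_derive_Reals in Hd.
  destruct (Rle_lt_dec d B) as [|Hlt]; [assumption|exfalso].
  destruct (Hd (d - B) ltac:(lra)) as [del Hdel].
  set (k := Rmin h del / 2).
  assert (Hk : 0 < Rmin h del) by (apply Rmin_pos; [lra|apply cond_pos]).
  pose proof (Rmin_l h del); pose proof (Rmin_r h del).
  specialize (Hdel k ltac:(unfold k; lra) ltac:(unfold k; rewrite Rabs_right; lra)).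
  specialize (HB k ltac:(unfold k; lra)).
  apply Rabs_def2 in Hdel; lra.
Qed.

Lemma derive_ge_of_quotient_ge f t d B h : is_derive f t d -> 0 < h ->
  (forall k, - h <= k < 0 -> B <= (f (t + k) - f t) / k) -> B <= d.
Proof.
  intros Hd Hh HB; apply is_derive_Reals in Hd.
  destruct (Rle_lt_dec B d) as [|Hlt]; [assumption|exfalso].
  destruct (Hd (B - d) ltac:(lra)) as [del Hdel].
  set (k := - (Rmin h del / 2)).
  assert (Hk : 0 < Rmin h del) by (apply Rmin_pos; [lra|apply cond_pos]).
  pose proof (Rmin_l h del); pose proof (Rmin_r h del).
  specialize (Hdel k ltac:(unfold k; lra) ltac:(unfold k; rewrite Rabs_left; lra)).
  specialize (HB k ltac:(unfold k; lra)).
  apply Rabs_def2 in Hdel; lra.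
Qed.

Lemma nested_interval_point (a b : nat -> R) :
  (forall n m, a n <= b m) -> exists s, forall n, a n <= s <= b n.
Proof.
  intros Hab.
  destruct (completeness (fun x => exists n, x = a n)) as [s [Hub Hlub]].
  - exists (b O); intros x [n ->]; apply Hab.
  - exists (a O), O; reflexivity.
  - exists s; intros n; split.
    + apply Hub; exists n; reflexivity.
    + apply Hlub; intros x [m ->]; apply Hab.
Qed.

Section ConvexSlopes.

Variable f : R -> R.
Hypothesis f_convex : convex f.

Lemma convex_slope_le_left x y z : x < y < z -> slope f x y <= slope f x z.
Proof.
  intros H; pose proof (convex_between f x y z f_convex H).
  unfold slope; apply Rdiv_le_cross; nra.
Qed.

Lemma convex_slope_le_right x y z : x < y < z -> slope f x z <= slope f y z.
Proof.
  intros H; pose proof (convex_between f x y z f_convex H).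
  unfold slope; apply Rdiv_le_cross; nra.
Qed.

Lemma convex_slope_mono x y x' y' : x < y -> x' < y' -> x <= x' -> y <= y' ->
  slope f x y <= slope f x' y'.
Proof.
  intros Hxy Hxy' Hx Hy.
  apply Rle_trans with (slope f x y').
  - destruct (Req_dec y y') as [<-|N]; [lra|]; apply convex_slope_le_left; lra.
  - destruct (Req_dec x x') as [<-|N]; [lra|]; apply convex_slope_le_right; lra.
Qed.

Definition convex_lip_const (a b : R) : R :=
  Rabs (slope f (a - 1) a) + Rabs (slope f b (b + 1)).

Lemma convex_lipschitz a b x y : a <= x <= b -> a <= y <= b ->
  Rabs (f y - f x) <= convex_lip_const a b * Rabs (y - x).
Proof.
  assert (HK : 0 <= convex_lip_const a b).
  { unfold convex_lip_const; pose proof (Rabs_pos (slope f (a - 1) a));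
    pose proof (Rabs_pos (slope f b (b + 1))); lra. }
  assert (Hlt : forall x y, a <= x -> x < y -> y <= b ->
            Rabs (f y - f x) <= convex_lip_const a b * Rabs (y - x)).
  { clear x y; intros x y Hx Hxy Hy.
    pose proof (convex_slope_mono (a - 1) a x y ltac:(lra) Hxy ltac:(lra) ltac:(lra)).
    pose proof (convex_slope_mono x y b (b + 1) Hxy ltac:(lra) ltac:(lra) ltac:(lra)).
    rewrite <- (slope_mul f x y), Rabs_mult by lra.
    apply Rmult_le_compat_r; [apply Rabs_pos|].
    unfold convex_lip_const; apply Rabs_le.
    pose proof (Rle_abs (slope f b (b + 1))); pose proof (Rle_abs (- slope f (a - 1) a)).
    pose proof (Rabs_pos (slope f b (b + 1))); pose proof (Rabs_pos (slope f (a - 1) a)).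
    rewrite Rabs_Ropp in *; split; lra. }
  intros Hx Hy; destruct (Rtotal_order x y) as [H|[<-|H]].
  - apply Hlt; lra.
  - rewrite !Rminus_diag, Rabs_R0, Rmult_0_r; lra.
  - rewrite (Rabs_minus_sym (f y)), (Rabs_minus_sym y); apply Hlt; lra.
Qed.

Lemma convex_continuous x : continuous f x.
Proof.
  set (K := convex_lip_const (x - 1) (x + 1)).
  assert (HK : 0 <= K).
  { unfold K, convex_lip_const; pose proof (Rabs_pos (slope f (x - 1 - 1) (x - 1)));
    pose proof (Rabs_pos (slope f (x + 1) (x + 1 + 1))); lra. }
  apply filterlim_locally; intros eps.
  assert (Hd : 0 < Rmin 1 (eps / (K + 1))).
  { apply Rmin_pos; [lra|apply Rdiv_lt_0_compat; [apply cond_pos|lra]]. }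
  exists (mkposreal _ Hd); intros y Hy; change (Rabs (y - x) < Rmin 1 (eps / (K + 1))) in Hy.
  change (Rabs (f y - f x) < eps).
  pose proof (Rmin_l 1 (eps / (K + 1))); pose proof (Rmin_r 1 (eps / (K + 1))).
  pose proof (Rabs_def2 (y - x) 1 ltac:(lra)).
  apply Rle_lt_trans with ((K + 1) * Rabs (y - x)).
  { pose proof (convex_lipschitz (x - 1) (x + 1) x y ltac:(lra) ltac:(lra)).
    fold K in H2; pose proof (Rabs_pos (y - x)); nra. }
  replace (pos eps) with ((K + 1) * (eps / (K + 1))) by (field; lra).
  apply Rmult_lt_compat_l; lra.
Qed.

Lemma convex_derive_slope_bounds t d h : is_derive f t d -> 0 < h ->
  slope f (t - h) t <= d <= slope f t (t + h).
Proof.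
  intros Hd Hh; split.
  - apply (derive_ge_of_quotient_ge f t d _ h Hd Hh); intros k Hk.
    replace ((f (t + k) - f t) / k) with (slope f (t + k) t) by (unfold slope; field; lra).
    destruct (Req_dec k (- h)) as [->|N]; [unfold Rminus; lra|].
    apply convex_slope_le_right; lra.
  - apply (derive_le_of_quotient_le f t d _ h Hd Hh); intros k Hk.
    replace ((f (t + k) - f t) / k) with (slope f t (t + k)) by (unfold slope; field; lra).
    destruct (Req_dec k h) as [->|N]; [lra|].
    apply convex_slope_le_left; lra.
Qed.

Section DerivablePoint.

Definition lower_slope (p : R * R) : R := slope f (2 * fst p - snd p) (fst p).
Definition upper_slope (p : R * R) : R := slope f (snd p) (2 * snd p - fst p).
Definition slope_gap (p : R * R) : R := upper_slope p - lower_slope p.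

Lemma slope_within_window p x y : fst p <= x -> x < y -> y <= snd p ->
  lower_slope p <= slope f x y <= upper_slope p.
Proof.
  intros Hx Hxy Hy; unfold lower_slope, upper_slope; split;
    apply convex_slope_mono; lra.
Qed.

(* The slopes of a window are measured on the adjacent intervals of the same length.  Of
   the windows [u+h, u+2h] and [u+4h, u+5h], h = (v-u)/6, whose slope intervals do not
   overlap inside [u, v], one has at most half the slope gap of [u, v]. *)
Definition refine (p : R * R) : R * R :=
  let u := fst p in let h := (snd p - u) / 6 in
  if Rle_dec (slope_gap (u + h, u + 2 * h)) (slope_gap (u + 4 * h, u + 5 * h))
  then (u + h, u + 2 * h) else (u + 4 * h, u + 5 * h).

Lemma refine_spec p : fst p < snd p ->
  fst p < fst (refine p) < snd (refine p) /\ snd (refine p) < snd p /\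
  slope_gap (refine p) <= slope_gap p / 2.
Proof.
  destruct p as [u v]; simpl; intros Huv.
  set (h := (v - u) / 6).
  assert (Hh : 0 < h) by (unfold h; lra).
  assert (Hsum : slope_gap (u + h, u + 2 * h) + slope_gap (u + 4 * h, u + 5 * h)
                 <= slope_gap (u, v)).
  { unfold slope_gap, lower_slope, upper_slope; simpl.
    replace (2 * (u + h) - (u + 2 * h)) with u by ring.
    replace (2 * (u + 2 * h) - (u + h)) with (u + 3 * h) by ring.
    replace (2 * (u + 4 * h) - (u + 5 * h)) with (u + 3 * h) by ring.
    replace (2 * (u + 5 * h) - (u + 4 * h)) with v by (unfold h; field).
    pose proof (convex_slope_mono (2 * u - v) u u (u + h)
                  ltac:(lra) ltac:(lra) ltac:(lra) ltac:(lra)).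
    pose proof (convex_slope_mono (u + 2 * h) (u + 3 * h) (u + 3 * h) (u + 4 * h)
                  ltac:(lra) ltac:(lra) ltac:(lra) ltac:(lra)).
    pose proof (convex_slope_mono (u + 5 * h) v v (2 * v - u)
                  ltac:(unfold h; lra) ltac:(lra) ltac:(unfold h; lra) ltac:(lra)).
    lra. }
  unfold refine; simpl; fold h.
  destruct (Rle_dec _ _); simpl; repeat split; unfold h in *.
  all: lra.
Qed.

Variables a b : R.
Hypothesis Hab : a < b.

Let window (n : nat) : R * R := Nat.iter n refine (a, b).

Lemma window_spec n :
  fst (window n) < snd (window n) /\
  fst (window n) < fst (window (S n)) /\ snd (window (S n)) < snd (window n) /\
  slope_gap (window n) <= slope_gap (a, b) * (/ 2) ^ n.
Proof.
  induction n as [|n [Hlt [_ [_ Hgap]]]].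
  - simpl; destruct (refine_spec (a, b)) as [H1 [H2 _]]; simpl in *; lra.
  - destruct (refine_spec _ Hlt) as [H1 [H2 H3]].
    change (window (S n)) with (refine (window n)).
    destruct (refine_spec _ (proj2 H1)) as [H4 [H5 _]].
    change (window (S (S n))) with (refine (refine (window n))).
    simpl pow; repeat split; try lra.
Qed.

Lemma window_mono n m : (n <= m)%nat ->
  fst (window n) <= fst (window m) /\ snd (window m) <= snd (window n).
Proof.
  induction 1 as [|m _ [IH1 IH2]]; [lra|].
  destruct (window_spec m) as [_ [H1 [H2 _]]]; lra.
Qed.

Lemma window_common n m : exists x y, x < y /\
  fst (window n) <= x /\ y <= snd (window n) /\ fst (window m) <= x /\ y <= snd (window m).
Proof.
  destruct (window_mono n (Nat.max n m) (Nat.le_max_l n m)).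
  destruct (window_mono m (Nat.max n m) (Nat.le_max_r n m)).
  exists (fst (window (Nat.max n m))), (snd (window (Nat.max n m))).
  destruct (window_spec (Nat.max n m)) as [Hlt _]; repeat split; assumption.
Qed.

Lemma window_gap_small eps : 0 < eps -> exists N, slope_gap (window N) < eps.
Proof.
  intros Heps; set (G := slope_gap (a, b)).
  assert (HG : 0 <= G).
  { unfold G, slope_gap, lower_slope, upper_slope; simpl.
    pose proof (convex_slope_mono (2 * a - b) a b (2 * b - a)); lra. }
  destruct (pow_lt_1_zero (/ 2) ltac:(rewrite Rabs_right; lra)
              (eps / (G + 1)) ltac:(apply Rdiv_lt_0_compat; lra)) as [N HN].
  specialize (HN N (le_n N)); rewrite Rabs_right in HN by (apply Rle_ge, pow_le; lra).
  exists N; destruct (window_spec N) as [_ [_ [_ Hgap]]]; fold G in Hgap.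
  apply Rmult_lt_compat_l with (r := G + 1) in HN; [|lra].
  replace ((G + 1) * (eps / (G + 1))) with eps in HN by (field; lra).
  pose proof (pow_le (/ 2) N ltac:(lra)); nra.
Qed.

Lemma derive_of_window_squeeze z d :
  (forall n, fst (window n) < z < snd (window n)) ->
  (forall n, lower_slope (window n) <= d <= upper_slope (window n)) -> is_derive f z d.
Proof.
  intros Hin Hd; apply is_derive_Reals; intros eps Heps.
  destruct (window_gap_small eps Heps) as [N HN]; unfold slope_gap in HN.
  destruct (Hin N) as [HzN1 HzN2]; pose proof (Hd N).
  assert (Hdel : 0 < Rmin (z - fst (window N)) (snd (window N) - z)) by (apply Rmin_pos; lra).
  exists (mkposreal _ Hdel); intros k Hk0 Hk; simpl in Hk.
  pose proof (Rmin_l (z - fst (window N)) (snd (window N) - z)).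
  pose proof (Rmin_r (z - fst (window N)) (snd (window N) - z)).
  apply Rabs_def2 in Hk.
  replace ((f (z + k) - f z) / k) with (slope f z (z + k)) by (unfold slope; field; lra).
  destruct (Rlt_dec 0 k).
  - pose proof (slope_within_window (window N) z (z + k) ltac:(lra) ltac:(lra) ltac:(lra)).
    apply Rabs_def1; lra.
  - rewrite slope_sym.
    pose proof (slope_within_window (window N) (z + k) z ltac:(lra) ltac:(lra) ltac:(lra)).
    apply Rabs_def1; lra.
Qed.

Lemma convex_exists_derive_point : exists z d, a < z < b /\ is_derive f z d.
Proof.
  destruct (nested_interval_point (fun n => fst (window n)) (fun n => snd (window n)))
    as [z Hz].
  { intros n m; destruct (window_common n m) as [x [y H]]; lra. }
  destruct (nested_interval_point (fun n => lower_slope (window n))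
              (fun n => upper_slope (window n))) as [d Hd].
  { intros n m; destruct (window_common n m) as [x [y [Hxy [Hn1 [Hn2 [Hm1 Hm2]]]]]].
    pose proof (slope_within_window (window n) x y Hn1 Hxy Hn2).
    pose proof (slope_within_window (window m) x y Hm1 Hxy Hm2); lra. }
  assert (Hin : forall n, fst (window n) < z < snd (window n)).
  { intros n; destruct (window_spec n) as [_ [H1 [H2 _]]].
    pose proof (Hz n); pose proof (Hz (S n)); simpl in *; lra. }
  exists z, d; split; [apply (Hin O)|].
  apply derive_of_window_squeeze; [exact Hin|exact Hd].
Qed.

End DerivablePoint.

End ConvexSlopes.

Lemma convex_sum_sym_mono f t a b : convex f -> Rabs a <= Rabs b ->
  f (t - a) + f (t + a) <= f (t - b) + f (t + b).
Proof.
  assert (Habs : forall a, f (t - a) + f (t + a) = f (t - Rabs a) + f (t + Rabs a)).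
  { intros a'; destruct (Rle_lt_dec 0 a') as [Ha|Ha].
    - rewrite Rabs_right by lra; reflexivity.
    - rewrite Rabs_left by lra; replace (t - - a') with (t + a') by ring;
        replace (t + - a') with (t - a') by ring; ring. }
  intros Hf Hab; rewrite (Habs a), (Habs b).
  destruct (Req_dec (Rabs a) (Rabs b)) as [->|N]; [lra|].
  pose proof (Rabs_pos a).
  pose proof (convex_slope_mono f Hf (t - Rabs b) (t - Rabs a) (t + Rabs a) (t + Rabs b)
                ltac:(lra) ltac:(lra) ltac:(lra) ltac:(lra)) as Hsl.
  unfold slope in Hsl.
  replace (t - Rabs a - (t - Rabs b)) with (Rabs b - Rabs a) in Hsl by ring.
  replace (t + Rabs b - (t + Rabs a)) with (Rabs b - Rabs a) in Hsl by ring.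
  apply Rmult_le_compat_r with (r := Rabs b - Rabs a) in Hsl; [|lra].
  unfold Rdiv in Hsl; rewrite !Rmult_assoc, Rinv_l in Hsl by lra; lra.
Qed.

Lemma convex_glue_linear f c d : 0 < d ->
  (forall x y l, x <= 0 -> y <= 0 -> 0 <= l <= 1 ->
     f (l * x + (1 - l) * y) <= l * f x + (1 - l) * f y) ->
  (forall t, - d <= t -> f t = c * t) -> convex f.
Proof.
  intros Hd Hneg Hlin; apply convex_of_between.
  assert (Hbet : forall x y z, x < y < z -> z <= 0 ->
            f y * (z - x) <= (z - y) * f x + (y - x) * f z).
  { intros x y z Hxyz Hz; apply segment_convex_between; auto.
    intros l Hl; apply Hneg; auto; lra. }
  assert (Hf0 : f 0 = 0) by (rewrite Hlin; lra).
  assert (Hsec : forall x y, x < y -> y <= 0 -> f y - f x <= c * (y - x)).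
  { intros x y Hxy Hy; destruct (Rle_lt_dec (- d) x) as [Hx|Hx].
    { rewrite !Hlin by lra; lra. }
    assert (Hfx : c * x <= f x).
    { pose proof (Hbet x (- d / 2) 0 ltac:(lra) ltac:(lra)) as H.
      rewrite Hf0, (Hlin (- d / 2)) in H by lra; nra. }
    destruct (Req_dec y 0) as [->|Ny]; [rewrite Hf0; lra|].
    pose proof (Hbet x y 0 ltac:(lra) ltac:(lra)) as H; rewrite Hf0 in H.
    apply Rmult_le_reg_r with (- x); [lra|nra]. }
  intros x y z Hxyz.
  destruct (Rle_lt_dec z 0) as [Hz|Hz]; [apply Hbet; auto|].
  destruct (Rle_lt_dec (- d) x) as [Hx|Hx]; [rewrite !Hlin by lra; nra|].
  pose proof (Hsec x 0 ltac:(lra) ltac:(lra)) as Hx0; rewrite Hf0 in Hx0.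
  rewrite (Hlin z) by lra.
  destruct (Rle_lt_dec y 0) as [Hy|Hy].
  - destruct (Req_dec y 0) as [->|Ny]; [rewrite Hf0; nra|].
    pose proof (Hbet x y 0 ltac:(lra) ltac:(lra)) as H; rewrite Hf0 in H.
    pose proof (Hsec x y ltac:(lra) ltac:(lra)); nra.
  - rewrite (Hlin y) by lra; nra.
Qed.

Lemma convex_increment_le f c d x y : convex f ->
  (forall t, - d <= t -> f t = c * t) -> x <= y -> f y - f x <= c * (y - x).
Proof.
  intros Hf Hlin Hxy; destruct (Req_dec x y) as [->|Nxy]; [lra|].
  set (K := Rabs x + Rabs d).
  pose proof (Rle_abs (- x)); pose proof (Rle_abs (- d)); rewrite !Rabs_Ropp in *.
  pose proof (Rabs_pos x); pose proof (Rabs_pos d).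
  pose proof (convex_slope_mono f Hf x y (x + K) (y + K) ltac:(lra) ltac:(lra)
                ltac:(unfold K; lra) ltac:(unfold K; lra)) as Hsl.
  unfold slope in Hsl; rewrite !(Hlin (_ + K)) in Hsl by (unfold K; lra).
  replace ((c * (y + K) - c * (x + K)) / (y + K - (x + K))) with c in Hsl by (field; lra).
  rewrite <- (slope_mul f x y) by lra; unfold slope in *; nra.
Qed.

(** * Continuity, integrals and limits on R *)

Lemma continuous_Rplus (h1 h2 : R -> R) x : continuous h1 x -> continuous h2 x ->
  continuous (fun s => h1 s + h2 s) x.
Proof. apply (@continuous_plus R_UniformSpace R_AbsRing R_NormedModule). Qed.

Lemma continuous_Ropp (h : R -> R) x : continuous h x -> continuous (fun s => - h s) x.
Proof. apply (@continuous_opp R_UniformSpace R_AbsRing R_NormedModule). Qed.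

Lemma continuous_Rminus (h1 h2 : R -> R) x : continuous h1 x -> continuous h2 x ->
  continuous (fun s => h1 s - h2 s) x.
Proof. intros H1 H2; apply continuous_Rplus; [|apply continuous_Ropp]; assumption. Qed.

Lemma continuous_Rmult (h1 h2 : R -> R) x : continuous h1 x -> continuous h2 x ->
  continuous (fun s => h1 s * h2 s) x.
Proof. apply (@continuous_mult R_UniformSpace R_AbsRing). Qed.

Lemma continuous_Rcomp (u f : R -> R) x : continuous u x -> continuous f (u x) ->
  continuous (fun s => f (u s)) x.
Proof. apply (@continuous_comp R_UniformSpace R_UniformSpace R_UniformSpace). Qed.

Ltac solve_continuous :=
  intros;
  lazymatch goal with
  | H : forall _, continuous ?h _ |- continuous ?h _ => apply H
  | |- continuous (fun _ => ?c) _ => apply continuous_const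
  | |- continuous (fun s => s) _ => apply continuous_id
  | |- continuous (fun s => @?h1 s + @?h2 s) _ =>
      apply (continuous_Rplus h1 h2); solve_continuous
  | |- continuous (fun s => @?h1 s - @?h2 s) _ =>
      apply (continuous_Rminus h1 h2); solve_continuous
  | |- continuous (fun s => @?h1 s * @?h2 s) _ =>
      apply (continuous_Rmult h1 h2); solve_continuous
  | |- continuous (fun s => - @?h s) _ => apply (continuous_Ropp h); solve_continuous
  | |- continuous (fun s => ?f (@?u s)) _ => apply (continuous_Rcomp u f); solve_continuous
  end.

Lemma is_RInt_gen_compact_support (F : R -> R) A : 0 < A -> (forall x, continuous F x) ->
  (forall x, (x < - A \/ A < x) -> F x = 0) ->
  is_RInt_gen F (Rbar_locally m_infty) (Rbar_locally p_infty) (RInt F (- A) A).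
Proof.
  intros HA Hc Hz P HP.
  assert (Hex : forall a b, ex_RInt F a b)
    by (intros; apply (@ex_RInt_continuous R_CompleteNormedModule); auto).
  assert (Hzero : forall a b, (forall x, a < x < b -> F x = 0) -> a <= b -> RInt F a b = 0).
  { intros a b Hab Hle; rewrite (RInt_ext F (fun _ => 0)), RInt_const.
    - apply Rmult_0_r.
    - intros x; rewrite Rmin_left, Rmax_right by lra; apply Hab. }
  apply Filter_prod with (fun a => a < - A) (fun b => A < b).
  - exists (- A); auto.
  - exists A; auto.
  - intros a b Ha Hb; exists (RInt F (- A) A); split; [|apply locally_singleton; exact HP].
    replace (RInt F (- A) A) with (RInt F a b);
      [apply (@RInt_correct R_CompleteNormedModule), Hex|].
    rewrite <- (RInt_Chasles F a (- A) b), <- (RInt_Chasles F (- A) A b) by apply Hex.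
    rewrite (Hzero a (- A)), (Hzero A b); try lra; try (intros x Hx; apply Hz; lra).
    change (0 + (RInt F (- A) A + 0) = RInt F (- A) A); ring.
Qed.

Lemma RInt_eq_of_is_RInt_gen (F : R -> R) l : (forall x, continuous F x) ->
  (forall x, (x < -1 \/ 1 < x) -> F x = 0) ->
  is_RInt_gen F (Rbar_locally m_infty) (Rbar_locally p_infty) l -> RInt F (-1) 1 = l.
Proof.
  intros Hc Hz Hl; pose proof (is_RInt_gen_compact_support F 1 Rlt_0_1 Hc Hz) as H1.
  rewrite <- (is_RInt_gen_unique F l Hl), (is_RInt_gen_unique F _ H1); reflexivity.
Qed.

Lemma RInt_reflect (F : R -> R) : ex_RInt F 1 (-1) ->
  RInt (fun s => F (- s)) (-1) 1 = RInt F (-1) 1.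
Proof.
  intros Hex; apply is_RInt_unique.
  apply (is_RInt_ext (fun s => opp (opp (F (- s))))).
  { intros s _; apply opp_opp. }
  rewrite <- (opp_RInt_swap F) by exact Hex.
  apply (@is_RInt_opp R_NormedModule), (@is_RInt_comp_opp R_NormedModule).
  replace (- -1) with 1 by ring; replace (- (1)) with (-1) by ring.
  apply (@RInt_correct R_CompleteNormedModule), Hex.
Qed.

Lemma small_of_linear_bound K eta : 0 <= K -> 0 < eta ->
  exists e0, 0 < e0 /\ forall e, 0 <= e < e0 -> K * e < eta.
Proof.
  intros HK Heta; exists (eta / (K + 1)); split; [apply Rdiv_lt_0_compat; lra|].
  intros e He; apply Rle_lt_trans with ((K + 1) * e); [nra|].
  replace eta with ((K + 1) * (eta / (K + 1))) by (field; lra).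
  apply Rmult_lt_compat_l; lra.
Qed.

Lemma filterlim_at_right_0_of_bound (F : R -> R) l d K : 0 < d -> 0 <= K ->
  (forall e, 0 < e < d -> Rabs (F e - l) <= K * e) -> filterlim F (at_right 0) (locally l).
Proof.
  intros Hd HK HF; apply filterlim_locally; intros eta.
  destruct (small_of_linear_bound K eta HK (cond_pos eta)) as [e0 [He0 Hsmall]].
  assert (Hdel : 0 < Rmin d e0) by (apply Rmin_pos; assumption).
  exists (mkposreal _ Hdel); intros e He Hpos.
  change (Rabs (e - 0) < Rmin d e0) in He; rewrite Rminus_0_r, Rabs_right in He by lra.
  pose proof (Rmin_l d e0); pose proof (Rmin_r d e0).
  apply Rle_lt_trans with (K * e); [apply HF|apply Hsmall]; lra.
Qed.

Lemma Rle_of_approx a b K : 0 <= K -> (forall eta, 0 < eta < 1 -> a <= b + K * eta) -> a <= b.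
Proof.
  intros HK H; destruct (Rle_lt_dec a b) as [|Hlt]; [assumption|exfalso].
  destruct (small_of_linear_bound K (a - b) HK ltac:(lra)) as [e0 [He0 Hsmall]].
  set (eta := Rmin e0 1 / 2).
  assert (Hmin : 0 < Rmin e0 1) by (apply Rmin_pos; lra).
  pose proof (Rmin_l e0 1); pose proof (Rmin_r e0 1).
  specialize (H eta ltac:(unfold eta; lra)); specialize (Hsmall eta ltac:(unfold eta; lra)); lra.
Qed.

Lemma is_derive_shift (f : R -> R) a b t D :
  is_derive (fun x => f (x + a) - b) t D -> is_derive f (t + a) D.
Proof.
  intros H; apply is_derive_Reals in H; apply is_derive_Reals; intros eps Heps.
  destruct (H eps Heps) as [del Hdel]; exists del; intros k Hk0 Hk.
  specialize (Hdel k Hk0 Hk).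
  replace (t + a + k) with (t + k + a) by ring.
  replace ((f (t + k + a) - f (t + a)) / k) with ((f (t + k + a) - b - (f (t + a) - b)) / k)
    by (field; exact Hk0).
  exact Hdel.
Qed.

Lemma is_derive_linear_near (f : R -> R) c t D r : 0 < r ->
  (forall x, Rabs (x - t) < r -> f x = c * x) -> is_derive f t D -> D = c.
Proof.
  intros Hr Hlin HD.
  assert (Hc : is_derive f t c).
  { apply (is_derive_ext_loc (fun x => c * x)).
    - exists (mkposreal r Hr); intros x Hx; symmetry; apply Hlin, Hx.
    - auto_derive; [exact I|ring]. }
  rewrite <- (is_derive_unique f t D HD); apply is_derive_unique, Hc.
Qed.

(** * Averaging against an even kernel *)

Section Kernel.

Variable g : R -> R.
Hypothesis g_cont : forall x, continuous g x.
Hypothesis g_supp : forall t, (t < -1 \/ 1 < t) -> g t = 0.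
Hypothesis g_even : forall t, g t = g (- t).
Hypothesis g_nonneg : forall t, 0 <= g t.
Hypothesis g_mass : RInt g (-1) 1 = 1.

Definition wmean (h : R -> R) : R := RInt (fun s => h s * g s) (-1) 1.

Lemma ex_RInt_weighted (h : R -> R) : (forall x, continuous h x) ->
  ex_RInt (fun s => h s * g s) (-1) 1.
Proof. intros; apply (@ex_RInt_continuous R_CompleteNormedModule); solve_continuous. Qed.

Lemma wmean_ext (h1 h2 : R -> R) :
  (forall s, -1 < s < 1 -> h1 s = h2 s) -> wmean h1 = wmean h2.
Proof.
  intros H; apply RInt_ext; intros s Hs.
  rewrite Rmin_left, Rmax_right in Hs by lra; rewrite H; auto.
Qed.

Lemma wmean_le (h1 h2 : R -> R) : (forall x, continuous h1 x) -> (forall x, continuous h2 x) ->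
  (forall s, -1 < s < 1 -> h1 s <= h2 s) -> wmean h1 <= wmean h2.
Proof.
  intros C1 C2 H; apply RInt_le; [lra|apply ex_RInt_weighted, C1|apply ex_RInt_weighted, C2|].
  intros s Hs; apply Rmult_le_compat_r; [apply g_nonneg|apply H, Hs].
Qed.

Lemma wmean_lincomb a b (h1 h2 : R -> R) :
  (forall x, continuous h1 x) -> (forall x, continuous h2 x) ->
  wmean (fun s => a * h1 s + b * h2 s) = a * wmean h1 + b * wmean h2.
Proof.
  intros C1 C2; unfold wmean.
  rewrite (RInt_ext _ (fun s => plus (scal a (h1 s * g s)) (scal b (h2 s * g s)))).
  2:{ intros s _; change ((a * h1 s + b * h2 s) * g s = a * (h1 s * g s) + b * (h2 s * g s)).
      ring. }
  rewrite (@RInt_plus R_CompleteNormedModule), !(@RInt_scal R_CompleteNormedModule).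
  - reflexivity.
  - apply ex_RInt_weighted; assumption.
  - apply ex_RInt_weighted; assumption.
  - apply (@ex_RInt_scal R_CompleteNormedModule), ex_RInt_weighted; assumption.
  - apply (@ex_RInt_scal R_CompleteNormedModule), ex_RInt_weighted; assumption.
Qed.

Lemma wmean_const a : wmean (fun _ => a) = a.
Proof.
  unfold wmean; rewrite (RInt_ext _ (fun s => scal a (g s))).
  2:{ intros s _; change (a * g s = a * g s); reflexivity. }
  rewrite (@RInt_scal R_CompleteNormedModule), g_mass.
  - change (a * 1 = a); ring.
  - apply (@ex_RInt_continuous R_CompleteNormedModule); auto.
Qed.

Lemma wmean_le_const (h : R -> R) K : (forall x, continuous h x) ->
  (forall s, -1 < s < 1 -> h s <= K) -> wmean h <= K.
Proof.
  intros C H; rewrite <- (wmean_const K); apply wmean_le; [solve_continuous..|exact H].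
Qed.

Lemma wmean_ge_const (h : R -> R) K : (forall x, continuous h x) ->
  (forall s, -1 < s < 1 -> K <= h s) -> K <= wmean h.
Proof.
  intros C H; rewrite <- (wmean_const K); apply wmean_le; [solve_continuous..|exact H].
Qed.

Lemma wmean_reflect (h : R -> R) : (forall x, continuous h x) ->
  wmean (fun s => h (- s)) = wmean h.
Proof.
  intros C; unfold wmean.
  transitivity (RInt (fun s => (fun s => h s * g s) (- s)) (-1) 1).
  - apply RInt_ext; intros s _; cbv beta; rewrite <- g_even; reflexivity.
  - apply (RInt_reflect (fun s => h s * g s)), ex_RInt_swap, ex_RInt_weighted, C.
Qed.

Lemma wmean_scal a (h : R -> R) : (forall x, continuous h x) ->
  wmean (fun s => a * h s) = a * wmean h.
Proof.
  intros C; rewrite <- (Rplus_0_r (a * wmean h)), <- (Rmult_0_l (wmean h)).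
  rewrite <- wmean_lincomb by exact C; apply wmean_ext; intros; ring.
Qed.

Lemma wmean_id : wmean (fun s => s) = 0.
Proof.
  assert (C : forall x, continuous (fun s : R => s) x) by solve_continuous.
  pose proof (wmean_reflect (fun s : R => s) C) as Hrefl.
  rewrite (wmean_ext _ (fun s => -1 * s)) in Hrefl by (intros; ring).
  rewrite wmean_scal in Hrefl by exact C; lra.
Qed.

Definition moll (f : R -> R) (e t : R) : R := wmean (fun s => f (t - e * s)).

Lemma chi_eps_moll (f : R -> R) e t : (forall x, continuous f x) -> 0 < e ->
  chi_eps f g e t = moll f e t.
Proof.
  intros Cf He; unfold chi_eps, conv, moll, wmean.
  set (F := fun s => f (t - s) * mollif g e s).
  assert (CF : forall x, continuous F x).
  { unfold F, mollif, Rdiv; solve_continuous. }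
  rewrite (is_RInt_gen_unique F (RInt F (- e) e)).
  2:{ apply is_RInt_gen_compact_support; auto; intros x Hx; unfold F, mollif.
      rewrite g_supp; [ring|].
      destruct Hx; [left|right]; apply Rmult_lt_reg_r with e; auto; unfold Rdiv;
        rewrite Rmult_assoc, Rinv_l; lra. }
  pose proof ((@RInt_comp_lin R_CompleteNormedModule) F e 0 (-1) 1) as Hsub.
  replace (e * -1 + 0) with (- e) in Hsub by ring; replace (e * 1 + 0) with e in Hsub by ring.
  rewrite <- Hsub by (apply (@ex_RInt_continuous R_CompleteNormedModule); auto).
  apply RInt_ext; intros s _; unfold F, mollif.
  change (e * (f (t - (e * s + 0)) * (/ e * g ((e * s + 0) / e))) = f (t - e * s) * g s).
  replace ((e * s + 0) / e) with s by (field; lra); replace (e * s + 0) with (e * s) by ring.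
  field; lra.
Qed.

Section Mollification.

Variable f : R -> R.
Hypothesis f_cont : forall x, continuous f x.

Lemma moll_linear c d e t : (forall u, - d <= u -> f u = c * u) -> 0 <= e -> - d <= t - e ->
  moll f e t = c * t.
Proof.
  intros Hlin He Ht; unfold moll.
  rewrite (wmean_ext _ (fun s => (c * t) * 1 + (- c * e) * s)).
  - rewrite wmean_lincomb, wmean_const, wmean_id by solve_continuous; ring.
  - intros s Hs; rewrite Hlin by nra; ring.
Qed.

Lemma moll_sub e x y :
  moll f e y - moll f e x = wmean (fun s => f (y - e * s) - f (x - e * s)).
Proof.
  unfold moll; rewrite (wmean_ext (fun s => f (y - e * s) - f (x - e * s))
                         (fun s => 1 * f (y - e * s) + -1 * f (x - e * s))).
  - rewrite wmean_lincomb by solve_continuous; ring.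
  - intros; ring.
Qed.

Lemma moll_increment_le e x y K :
  (forall s, -1 < s < 1 -> f (y - e * s) - f (x - e * s) <= K) ->
  moll f e y - moll f e x <= K.
Proof. intros H; rewrite moll_sub; apply wmean_le_const; [solve_continuous|exact H]. Qed.

Lemma moll_increment_ge e x y K :
  (forall s, -1 < s < 1 -> K <= f (y - e * s) - f (x - e * s)) ->
  K <= moll f e y - moll f e x.
Proof. intros H; rewrite moll_sub; apply wmean_ge_const; [solve_continuous|exact H]. Qed.

Lemma moll_dist e t K : (forall s, -1 < s < 1 -> Rabs (f (t - e * s) - f t) <= K) ->
  Rabs (moll f e t - f t) <= K.
Proof.
  intros H; apply Rabs_le; split.
  - apply Rplus_le_reg_r with (f t); ring_simplify; apply wmean_ge_const; [solve_continuous|].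
    intros s Hs; specialize (H s Hs); apply Rabs_le_between in H; lra.
  - apply Rplus_le_reg_r with (f t); ring_simplify; apply wmean_le_const; [solve_continuous|].
    intros s Hs; specialize (H s Hs); apply Rabs_le_between in H; lra.
Qed.

Lemma moll_opp e t : moll (fun x => - f x) e t = - moll f e t.
Proof.
  unfold moll; rewrite (wmean_ext _ (fun s => -1 * f (t - e * s))) by (intros; ring).
  rewrite wmean_scal by solve_continuous; ring.
Qed.

Lemma moll_convex e : convex f -> convex (moll f e).
Proof.
  intros Hf x y l Hl; unfold moll.
  rewrite <- wmean_lincomb by solve_continuous.
  apply wmean_le; [solve_continuous..|]; intros s _.
  replace (l * x + (1 - l) * y - e * s) with (l * (x - e * s) + (1 - l) * (y - e * s)) by ring.
  apply Hf, Hl.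
Qed.

Lemma moll_symmetrized e t :
  moll f e t = wmean (fun s => / 2 * f (t - e * s) + / 2 * f (t + e * s)).
Proof.
  assert (Hrefl : wmean (fun s => f (t + e * s)) = moll f e t).
  { unfold moll; rewrite <- (wmean_reflect (fun s => f (t - e * s))) by solve_continuous.
    apply wmean_ext; intros; f_equal; ring. }
  rewrite wmean_lincomb, Hrefl by solve_continuous.
  change (wmean (fun s => f (t - e * s))) with (moll f e t); lra.
Qed.

End Mollification.

Lemma moll_le (f1 f2 : R -> R) e t1 t2 :
  (forall x, continuous f1 x) -> (forall x, continuous f2 x) ->
  (forall s, -1 < s < 1 -> f1 (t1 - e * s) <= f2 (t2 - e * s)) -> moll f1 e t1 <= moll f2 e t2.
Proof. intros C1 C2 H; apply wmean_le; [solve_continuous..|exact H]. Qed.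

Lemma moll_mono_eps (f : R -> R) e1 e2 t :
  (forall x, continuous f x) -> convex f -> 0 <= e1 <= e2 ->
  moll f e1 t <= moll f e2 t.
Proof.
  intros Cf Hf He; rewrite !moll_symmetrized by exact Cf.
  apply wmean_le; [solve_continuous..|]; intros s _.
  assert (Habs : Rabs (e1 * s) <= Rabs (e2 * s)).
  { rewrite !Rabs_mult, (Rabs_right e1), (Rabs_right e2) by lra.
    apply Rmult_le_compat_r; [apply Rabs_pos|lra]. }
  pose proof (convex_sum_sym_mono f t (e1 * s) (e2 * s) Hf Habs); lra.
Qed.

(** * The convex class *)

Section ConvexCase.

Variables (c d : R) (chi : R -> R).
Hypothesis c_pos : 0 < c.
Hypothesis d_pos : 0 < d.
Hypothesis chi_lin : forall t, - d <= t -> chi t = c * t.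
Hypothesis chi_W : Wminus_tilde chi.

Lemma Wminus_convex : convex chi.
Proof. destruct chi_W as [Hcv _]; apply (convex_glue_linear chi c d); assumption. Qed.

Lemma Wminus_continuous x : continuous chi x.
Proof. apply convex_continuous, Wminus_convex. Qed.

Lemma Wminus_increment_bounds x y : x <= y -> 0 <= chi y - chi x <= c * (y - x).
Proof.
  intros Hxy; split; [|apply (convex_increment_le chi c d); auto; apply Wminus_convex].
  destruct chi_W as [_ [Hmon _]].
  destruct (Rle_lt_dec y 0) as [Hy|Hy]; [pose proof (Hmon x y Hxy Hy); lra|].
  destruct (Rle_lt_dec (- d) x) as [Hx|Hx]; [rewrite !chi_lin by lra; nra|].
  pose proof (Hmon x 0 ltac:(lra) ltac:(lra)); rewrite (chi_lin 0), (chi_lin y) in * by lra; nra.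
Qed.

Lemma Wminus_moll_dist e t : 0 <= e -> Rabs (moll chi e t - chi t) <= c * e.
Proof.
  intros He; apply moll_dist; [exact Wminus_continuous|]; intros s Hs.
  assert (Hes : c * (e * Rabs s) <= c * e).
  { apply Rmult_le_compat_l; [lra|]; pose proof (Rabs_le_between s 1) as [_ H]; nra. }
  destruct (Rle_lt_dec 0 s) as [Hs0|Hs0].
  - pose proof (Wminus_increment_bounds (t - e * s) t ltac:(nra)).
    rewrite Rabs_left1 by lra; rewrite Rabs_right in Hes by lra; nra.
  - pose proof (Wminus_increment_bounds t (t - e * s) ltac:(nra)).
    rewrite Rabs_right by lra; rewrite Rabs_left in Hes by lra; nra.
Qed.

Lemma Wminus_moll e : 0 < e < d -> Wminus_tilde (moll chi e).
Proof.
  intros He.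
  assert (Hmono : forall x y, x <= y -> moll chi e x <= moll chi e y).
  { intros x y Hxy; apply moll_le; try exact Wminus_continuous; intros s _.
    pose proof (Wminus_increment_bounds (x - e * s) (y - e * s)); lra. }
  assert (H0 : moll chi e 0 = 0).
  { rewrite (moll_linear chi c d); auto; lra. }
  repeat split.
  - intros x y l _ _ Hl; apply moll_convex; [exact Wminus_continuous|exact Wminus_convex|exact Hl].
  - intros x y Hxy _; apply Hmono, Hxy.
  - intros t Ht; rewrite <- H0; apply Hmono, Ht.
  - exact H0.
  - exists (- (d - e) / 2); split; [lra|].
    rewrite (moll_linear chi c d) by (auto; lra).
    intros Hz; apply Rmult_integral in Hz; lra.
Qed.

Theorem Wminus_smoothing :
  (forall eps, 0 < eps < d -> Wminus_tilde (chi_eps chi g eps)) /\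
  (forall e1 e2 t, 0 < e1 -> e1 <= e2 -> e2 < d -> chi_eps chi g e1 t <= chi_eps chi g e2 t) /\
  (forall t, filterlim (fun eps => chi_eps chi g eps t) (at_right 0) (locally (chi t))) /\
  (forall eps, 0 < eps < d -> forall t, chi_eps chi g eps t - chi t <= c * eps).
Proof.
  assert (Hrep : forall e, 0 < e -> chi_eps chi g e = moll chi e).
  { intros e He; extensionality t; apply chi_eps_moll; [exact Wminus_continuous|exact He]. }
  split; [|split; [|split]].
  - intros eps Heps; rewrite Hrep by lra; apply Wminus_moll, Heps.
  - intros e1 e2 t He1 He12 He2; rewrite !Hrep by lra.
    apply moll_mono_eps; [exact Wminus_continuous|exact Wminus_convex|lra].
  - intros t; apply filterlim_at_right_0_of_bound with d c; [exact d_pos|lra|].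
    intros e He; rewrite Hrep by lra; apply Wminus_moll_dist; lra.
  - intros eps Heps t; rewrite Hrep by lra.
    pose proof (Wminus_moll_dist eps t ltac:(lra)) as H; apply Rabs_le_between in H; lra.
Qed.

End ConvexCase.

(** * The concave class *)

Section ConcaveCase.

Variables (c d M : R) (chi : R -> R).
Hypothesis c_pos : 0 < c.
Hypothesis d_pos : 0 < d.
Hypothesis d_lt_1 : d < 1.
Hypothesis M_ge1 : 1 <= M.
Hypothesis chi_lin : forall t, - d <= t -> chi t = c * t.
Hypothesis chi_W : Wplus M chi.

Let negchi (x : R) : R := - chi x.

Lemma Wplus_neg_convex : convex negchi.
Proof.
  destruct chi_W as [_ [Hcc _]]; apply (convex_glue_linear negchi (- c) d d_pos).
  - intros x y l Hx Hy Hl; unfold negchi; pose proof (Hcc x y l Hx Hy Hl); lra.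
  - intros t Ht; unfold negchi; rewrite chi_lin by exact Ht; ring.
Qed.

Lemma Wplus_continuous x : continuous chi x.
Proof.
  apply (continuous_ext (fun y => - negchi y)); [intros; unfold negchi; apply Ropp_involutive|].
  apply continuous_Ropp, convex_continuous, Wplus_neg_convex.
Qed.

Lemma Wplus_increment_ge x y : x <= y -> c * (y - x) <= chi y - chi x.
Proof.
  intros Hxy; pose proof (convex_increment_le negchi (- c) d x y Wplus_neg_convex) as H.
  unfold negchi in H; assert (- chi y - - chi x <= - c * (y - x)) by (apply H; auto;
    intros t Ht; rewrite chi_lin by exact Ht; ring); lra.
Qed.

Let lip (a b : R) : R := convex_lip_const negchi a b.

Lemma Wplus_lip_nonneg a b : 0 <= lip a b.
Proof.
  unfold lip, convex_lip_const; pose proof (Rabs_pos (slope negchi (a - 1) a));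
    pose proof (Rabs_pos (slope negchi b (b + 1))); lra.
Qed.

Lemma Wplus_lipschitz a b x y : a <= x <= b -> a <= y <= b ->
  Rabs (chi y - chi x) <= lip a b * Rabs (y - x).
Proof.
  intros Hx Hy; pose proof (convex_lipschitz negchi Wplus_neg_convex a b x y Hx Hy) as H.
  unfold negchi in H; replace (- chi y - - chi x) with (- (chi y - chi x)) in H by ring.
  rewrite Rabs_Ropp in H; exact H.
Qed.

Lemma Wplus_exists_derive_point a b : a < b -> exists z D, a < z < b /\ is_derive chi z D.
Proof.
  intros Hab; destruct (convex_exists_derive_point negchi Wplus_neg_convex a b Hab)
    as [z [D [Hz HD]]].
  exists z, (- D); split; [exact Hz|].
  apply (is_derive_ext (fun x => - negchi x)); [intros; unfold negchi; apply Ropp_involutive|].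
  apply (@is_derive_opp R_AbsRing R_NormedModule), HD.
Qed.

Lemma Wplus_increment_le_derive z D y h : z < y -> 0 < h -> is_derive chi z D ->
  chi (y + h) - chi y <= D * h.
Proof.
  intros Hzy Hh HD.
  pose proof (convex_derive_slope_bounds negchi Wplus_neg_convex z (- D) (y - z)
                ltac:(apply (is_derive_ext (fun x => - chi x)); [reflexivity|];
                      apply (@is_derive_opp R_AbsRing R_NormedModule), HD) ltac:(lra))
    as [_ HDslope].
  replace (z + (y - z)) with y in HDslope by ring.
  pose proof (convex_slope_mono negchi Wplus_neg_convex z y y (y + h)
                ltac:(lra) ltac:(lra) ltac:(lra) ltac:(lra)) as Hmono.
  unfold negchi in *; pose proof (slope_opp chi z y); pose proof (slope_opp chi y (y + h)).
  rewrite <- (slope_mul chi y (y + h)) by lra.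
  replace (y + h - y) with h by ring; apply Rmult_le_compat_r; lra.
Qed.

(* The derivative condition of [Wplus] only holds at differentiability points; these are
   dense, and at one of them slightly left of [y] concavity controls the chord from [y]. *)
Lemma Wplus_chord_bound y h : y < 0 -> 0 < h ->
  (chi (y + h) - chi y) * (- y) <= h * M * (- chi y).
Proof.
  intros Hy Hh; destruct chi_W as [_ [_ [_ [_ [Hneg Hder]]]]].
  pose proof (Wplus_lip_nonneg (y - 1) y) as HL.
  apply Rle_of_approx with (h * M * lip (y - 1) y); [apply Rmult_le_pos; nra|].
  intros eta Heta.
  destruct (Wplus_exists_derive_point (y - eta) y ltac:(lra)) as [z [D [Hz HD]]].
  pose proof (Wplus_increment_le_derive z D y h ltac:(lra) Hh HD) as Hchord.
  pose proof (Wplus_increment_ge y (y + h) ltac:(lra)) as Hinc.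
  pose proof (Hder z D ltac:(lra) HD) as Hbound.
  rewrite Rabs_mult, (Rabs_left z), (Rabs_right D), (Rabs_left (chi z)) in Hbound
    by (try apply Hneg; nra).
  pose proof (Wplus_lipschitz (y - 1) y z y ltac:(lra) ltac:(lra)) as Hlip.
  rewrite Rabs_right in Hlip by (pose proof (Wplus_increment_ge z y); nra).
  rewrite Rabs_right in Hlip by lra.
  assert (Hdist : - chi z <= - chi y + lip (y - 1) y * eta) by nra.
  assert (HDh : 0 <= D * h) by nra.
  apply Rle_trans with (D * h * (- y)); [apply Rmult_le_compat_r; lra|].
  apply Rle_trans with (D * h * (- z)); [apply Rmult_le_compat_l; lra|].
  replace (D * h * - z) with (h * (- z * D)) by ring.
  apply Rle_trans with (h * (M * - chi z)); [apply Rmult_le_compat_l; lra|].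
  assert (0 <= h * M) by nra; nra.
Qed.

Lemma Wplus_moll_neg_convex e : convex (fun x => - moll chi e x).
Proof.
  intros x y l Hl; rewrite <- !(moll_opp chi Wplus_continuous).
  apply (moll_convex negchi); [|exact Wplus_neg_convex|exact Hl].
  intros; unfold negchi; apply continuous_Ropp, Wplus_continuous.
Qed.

Lemma Wplus_moll_increment_ge e x y : x <= y -> c * (y - x) <= moll chi e y - moll chi e x.
Proof.
  intros Hxy; apply (moll_increment_ge chi Wplus_continuous); intros s _.
  replace (y - x) with (y - e * s - (x - e * s)) by ring; apply Wplus_increment_ge; lra.
Qed.

Lemma Wplus_moll_derive_ge e t D : is_derive (moll chi e) t D -> c <= D.
Proof.
  intros HD.
  pose proof (convex_derive_slope_bounds _ (Wplus_moll_neg_convex e) t (- D) 1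
                ltac:(apply (@is_derive_opp R_AbsRing R_NormedModule), HD) Rlt_0_1) as [_ Hsl].
  pose proof (Wplus_moll_increment_ge e t (t + 1) ltac:(lra)).
  unfold slope in Hsl; replace (t + 1 - t) with 1 in * by ring; unfold Rdiv in Hsl.
  rewrite Rinv_1, Rmult_1_r in Hsl; lra.
Qed.

Lemma Wplus_moll_derive_linear e t D : 0 <= e -> - d < t - e ->
  is_derive (moll chi e) t D -> D = c.
Proof.
  intros He Ht; apply is_derive_linear_near with (t - e + d); [lra|].
  intros x Hx; apply Rabs_def2 in Hx; apply (moll_linear chi c d); auto; lra.
Qed.

Lemma Wplus_moll_derive_le_increment e t D h : is_derive (moll chi e) t D -> 0 < h ->
  D * h <= moll chi e t - moll chi e (t - h).
Proof.
  intros HD Hh.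
  pose proof (convex_derive_slope_bounds _ (Wplus_moll_neg_convex e) t (- D) h
                ltac:(apply (@is_derive_opp R_AbsRing R_NormedModule), HD) Hh) as [Hsl _].
  unfold slope in Hsl; replace (t - (t - h)) with h in Hsl by ring.
  apply Rmult_le_compat_r with (r := h) in Hsl; [|lra].
  replace ((- moll chi e t - - moll chi e (t - h)) / h * h)
    with (- (moll chi e t - moll chi e (t - h))) in Hsl by (field; lra); lra.
Qed.

Lemma Wplus_moll_chord_bound e t h : 0 < e -> 0 < h -> e < - t ->
  (moll chi e t - moll chi e (t - h)) * (- t + h - e) <= h * M * (- moll chi e (t - h)).
Proof.
  intros He Hh Het; pose proof Wplus_continuous as Cchi.
  rewrite moll_sub, Rmult_comm, <- wmean_scal by solve_continuous.
  rewrite <- (moll_opp chi Cchi); unfold moll; rewrite <- wmean_scal by solve_continuous.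
  apply wmean_le; [solve_continuous..|]; intros s Hs; cbv beta.
  set (y := t - h - e * s).
  pose proof (Wplus_chord_bound y h ltac:(unfold y; nra) Hh) as Hb.
  pose proof (Wplus_increment_ge y (y + h) ltac:(lra)) as Hinc.
  replace (y + h - y) with h in Hinc by ring.
  replace (y + h) with (t - e * s) in * by (unfold y; ring).
  apply Rle_trans with ((chi (t - e * s) - chi y) * - y); [|exact Hb].
  rewrite Rmult_comm; apply Rmult_le_compat_l; [nra|unfold y; nra].
Qed.

(* Let [h -> 0] in [D h <= G t - G (t - h) <= h M (- G (t - h)) / (- t + h - e)]. *)
Lemma Wplus_moll_derive_bound e t D : 0 < e -> e < - t ->
  is_derive (moll chi e) t D -> D * (- t - e) <= M * (- moll chi e t).
Proof.
  intros He Het HD.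
  set (G := moll chi e); set (L := lip (t - 1 - e) (t + e)).
  pose proof (Wplus_lip_nonneg (t - 1 - e) (t + e)) as HL; fold L in HL.
  pose proof (Wplus_moll_derive_ge e t D HD) as HDc.
  apply Rle_of_approx with (M * L); [nra|]; intros h Hh.
  pose proof (Wplus_moll_derive_le_increment e t D h HD ltac:(lra)) as Hderiv.
  pose proof (Wplus_moll_chord_bound e t h He ltac:(lra) Het) as Hchord.
  assert (Hlip : G t - G (t - h) <= L * h).
  { unfold G; apply (moll_increment_le chi Wplus_continuous); intros s Hs.
    pose proof (Wplus_lipschitz (t - 1 - e) (t + e) (t - h - e * s) (t - e * s)
                  ltac:(nra) ltac:(nra)) as Hb; fold L in Hb.
    replace (t - e * s - (t - h - e * s)) with h in Hb by ring.
    rewrite (Rabs_right h) in Hb by lra.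
    pose proof (Rle_abs (chi (t - e * s) - chi (t - h - e * s))); lra. }
  fold G in Hderiv, Hchord.
  apply Rmult_le_reg_r with h; [lra|].
  apply Rle_trans with (D * h * (- t + h - e)).
  { replace (D * h * (- t + h - e)) with (D * (- t + h - e) * h) by ring.
    apply Rmult_le_compat_r; nra. }
  apply Rle_trans with ((G t - G (t - h)) * (- t + h - e)); [apply Rmult_le_compat_r; lra|].
  apply Rle_trans with (h * M * (- G (t - h))); [exact Hchord|].
  replace ((M * - G t + M * L * h) * h) with (h * M * (- G t + L * h)) by ring.
  apply Rmult_le_compat_l; [nra|lra].
Qed.

(* [q] is the factor lost in the derivative condition when the kernel averages [chi]
   over [[t + sigma - e, t + sigma + e]] instead of evaluating it at [t]. *)
Lemma Wplus_moll_shift e sigma q : 0 < e -> 0 <= sigma -> - d <= sigma - e -> 0 < q <= 1 ->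
  (forall t, t < 0 -> t + sigma - e <= - d -> - t * q <= - t - sigma - e) ->
  Wplus (M / q) (fun t => moll chi e (t + sigma) - c * sigma).
Proof.
  intros He Hs Hse Hq Hfar.
  set (F := fun t => moll chi e (t + sigma) - c * sigma).
  assert (Hinc : forall x y, x <= y -> c * (y - x) <= F y - F x).
  { intros x y Hxy; unfold F.
    pose proof (Wplus_moll_increment_ge e (x + sigma) (y + sigma) ltac:(lra)) as H.
    replace (y + sigma - (x + sigma)) with (y - x) in H by ring; lra. }
  assert (HF0 : F 0 = 0).
  { unfold F; rewrite (moll_linear chi c d) by (exact chi_lin || lra); ring. }
  assert (HMq : 1 <= M / q).
  { apply Rmult_le_reg_r with q; [lra|]; unfold Rdiv; rewrite Rmult_assoc, Rinv_l; lra. }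
  repeat split.
  - intros x y Hxy _; pose proof (Hinc x y ltac:(lra)); nra.
  - intros x y l _ _ Hl; pose proof (Wplus_moll_neg_convex e (x + sigma) (y + sigma) l Hl).
    unfold F; replace (l * x + (1 - l) * y + sigma) with (l * (x + sigma) + (1 - l) * (y + sigma))
      by ring; lra.
  - intros t Ht; pose proof (Hinc t 0 Ht); nra.
  - exact HF0.
  - intros t Ht; pose proof (Hinc t 0 ltac:(lra)); nra.
  - intros t D Ht HD; apply is_derive_shift in HD.
    pose proof (Wplus_moll_derive_ge e _ _ HD) as HDc.
    pose proof (Hinc t 0 ltac:(lra)) as HFt; rewrite HF0 in HFt.
    rewrite Rabs_mult, (Rabs_left t), (Rabs_right D), (Rabs_left (F t)) by nra.
    destruct (Rlt_le_dec (- d) (t + sigma - e)) as [Hnear|Hfar'].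
    + rewrite (Wplus_moll_derive_linear e _ _ ltac:(lra) Hnear HD).
      unfold F; rewrite (moll_linear chi c d) by (exact chi_lin || lra).
      replace (- (c * (t + sigma) - c * sigma)) with (- t * c) by ring.
      rewrite <- (Rmult_1_l (- t * c)) at 1; apply Rmult_le_compat_r; nra.
    + specialize (Hfar t Ht Hfar').
      assert (Htq : 0 < - t * q) by (apply Rmult_lt_0_compat; lra).
      pose proof (Wplus_moll_derive_bound e (t + sigma) D He ltac:(lra) HD) as Hb.
      apply Rmult_le_reg_r with q; [lra|].
      replace (M / q * - F t * q) with (M * - F t) by (field; lra).
      apply Rle_trans with (D * (- (t + sigma) - e)).
      { replace (- t * D * q) with (D * (- t * q)) by ring; apply Rmult_le_compat_l; lra. }
      apply Rle_trans with (M * - moll chi e (t + sigma)); [exact Hb|].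
      unfold F; apply Rmult_le_compat_l; [lra|].
      assert (0 <= c * sigma) by (apply Rmult_le_pos; lra); lra.
Qed.

Lemma Wplus_moll_shift_ge e t : 0 <= e -> chi t <= moll chi e (t + e).
Proof.
  intros He; pose proof Wplus_continuous as Cchi.
  apply wmean_ge_const; [solve_continuous|]; intros s Hs.
  assert (Hes : 0 <= e - e * s) by nra.
  pose proof (Wplus_increment_ge t (t + e - e * s) ltac:(lra)).
  pose proof (Rmult_le_pos c (e - e * s) ltac:(lra) Hes); lra.
Qed.

Lemma Wplus_moll_shift_dist a b e t : 0 <= e <= 1 -> a <= t <= b ->
  Rabs (moll chi e (t + e) - c * e - chi t) <= (2 * lip a (b + 2) + c) * e.
Proof.
  intros He Ht; set (L := lip a (b + 2)).
  assert (Hmoll : Rabs (moll chi e (t + e) - chi (t + e)) <= L * e).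
  { apply moll_dist; [exact Wplus_continuous|]; intros s Hs.
    pose proof (Wplus_lipschitz a (b + 2) (t + e) (t + e - e * s) ltac:(lra) ltac:(nra)) as Hl.
    fold L in Hl; replace (t + e - e * s - (t + e)) with (- (e * s)) in Hl by ring.
    rewrite Rabs_Ropp, Rabs_mult, (Rabs_right e) in Hl by lra.
    pose proof (Wplus_lip_nonneg a (b + 2)) as HL; fold L in HL.
    assert (Hs1 : Rabs s <= 1) by (apply Rabs_le; lra).
    assert (L * (e * Rabs s) <= L * e) by (apply Rmult_le_compat_l; nra); lra. }
  assert (Hshift : Rabs (chi (t + e) - chi t) <= L * e).
  { pose proof (Wplus_lipschitz a (b + 2) t (t + e) ltac:(lra) ltac:(lra)) as Hl.
    fold L in Hl; replace (t + e - t) with e in Hl by ring; rewrite (Rabs_right e) in Hl by lra.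
    exact Hl. }
  apply Rabs_le_between in Hmoll; apply Rabs_le_between in Hshift.
  apply Rabs_le; nra.
Qed.

Theorem Wplus_smoothing :
  (forall eps, 0 < eps < d ^ 2 / 2 -> Wplus (M / (1 - d)) (chi_eps chi g eps)) /\
  (forall eps, 0 < eps < d ^ 2 / 8 ->
     Wplus (M / (1 - d) ^ 2) (chibar_eps chi g c eps) /\
     (forall t, chi t - c * eps <= chibar_eps chi g c eps t)) /\
  (forall a b eta, 0 < eta -> exists e0, 0 < e0 /\
     forall eps, 0 < eps < e0 -> forall t, a <= t <= b ->
       Rabs (chibar_eps chi g c eps t - chi t) < eta).
Proof.
  assert (Hrep : forall e, 0 < e -> chi_eps chi g e = fun t => moll chi e (t + 0) - c * 0).
  { intros e He; extensionality t; rewrite Rplus_0_r, Rmult_0_r, Rminus_0_r.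
    apply chi_eps_moll; [exact Wplus_continuous|exact He]. }
  assert (Hrepbar : forall e, 0 < e -> chibar_eps chi g c e = fun t => moll chi e (t + e) - c * e).
  { intros e He; extensionality t; unfold chibar_eps.
    rewrite chi_eps_moll; [reflexivity|exact Wplus_continuous|exact He]. }
  assert (Hd2 : d ^ 2 < d) by (simpl; nra).
  split; [|split].
  - intros eps Heps; rewrite Hrep by lra.
    apply Wplus_moll_shift; try lra; intros t Ht Hfar; simpl in Heps; nra.
  - intros eps Heps; rewrite Hrepbar by lra; split.
    + apply Wplus_moll_shift; try lra.
      * split; [apply pow_lt; lra|simpl; nra].
      * intros t Ht Hfar; simpl in *; nra.
    + intros t; pose proof (Wplus_moll_shift_ge eps t); lra.
  - intros a b eta Heta.
    destruct (small_of_linear_bound (2 * lip a (b + 2) + c) eta) as [e0 [He0 Hsmall]];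
      [pose proof (Wplus_lip_nonneg a (b + 2)); lra|exact Heta|].
    exists (Rmin e0 1); split; [apply Rmin_pos; lra|]; intros eps Heps t Ht.
    pose proof (Rmin_l e0 1); pose proof (Rmin_r e0 1).
    rewrite Hrepbar by lra.
    eapply Rle_lt_trans; [apply Wplus_moll_shift_dist; [lra|exact Ht]|apply Hsmall; lra].
Qed.

End ConcaveCase.

End Kernel.

Theorem lemma2p5 (c delta M : R) (chi g : R -> R)
  (hc : 0 < c) (hd : 0 < delta < 1) (hM : 1 <= M)
  (hlin : forall t, - delta <= t -> chi t = c * t)
  (hclass : Wminus_tilde chi \/ Wplus M chi)
  (hsmooth : forall n x, ex_derive_n g n x)
  (hsupp : forall t, (t < -1 \/ 1 < t) -> g t = 0)
  (hsym : forall t, g t = g (- t))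
  (hbnd : forall t, 0 <= g t <= 1)
  (hint : is_RInt_gen g (Rbar_locally m_infty) (Rbar_locally p_infty) 1) :
  (Wminus_tilde chi ->
     (forall eps, 0 < eps < delta -> Wminus_tilde (chi_eps chi g eps)) /\
     (forall e1 e2 t, 0 < e1 -> e1 <= e2 -> e2 < delta ->
        chi_eps chi g e1 t <= chi_eps chi g e2 t) /\
     (forall t, filterlim (fun eps => chi_eps chi g eps t) (at_right 0) (locally (chi t))) /\
     (forall eps, 0 < eps < delta -> forall t, chi_eps chi g eps t - chi t <= c * eps)) /\
  (Wplus M chi ->
     (forall eps, 0 < eps < delta ^ 2 / 2 ->
        Wplus (M / (1 - delta)) (chi_eps chi g eps)) /\
     (forall eps, 0 < eps < delta ^ 2 / 8 ->
        Wplus (M / (1 - delta) ^ 2) (chibar_eps chi g c eps) /\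
        (forall t, chi t - c * eps <= chibar_eps chi g c eps t)) /\
     (forall a b eta, 0 < eta -> exists e0, 0 < e0 /\
        forall eps, 0 < eps < e0 -> forall t, a <= t <= b ->
          Rabs (chibar_eps chi g c eps t - chi t) < eta)).
Proof.
  assert (g_cont : forall x, continuous g x).
  { intros x; apply (@ex_derive_continuous R_AbsRing R_NormedModule), (hsmooth 1%nat x). }
  assert (g_nonneg : forall t, 0 <= g t) by (intros t; apply hbnd).
  pose proof (RInt_eq_of_is_RInt_gen g 1 g_cont hsupp hint) as g_mass.
  split; intros HW.
  - exact (Wminus_smoothing g g_cont hsupp hsym g_nonneg g_mass c delta chi hc (proj1 hd) hlin HW).
  - exact (Wplus_smoothing g g_cont hsupp hsym g_nonneg g_mass c delta M chi hc (proj1 hd)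
             (proj2 hd) hM hlin HW).
Qed.
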